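(* Let $X \in \Lambda^2_{14} = \mathfrak{g}_2$ with $\operatorname{rank} X \leq 4$. Then $\ker X$ contains an associative $3$-plane.
   Context: Equip $\mathbb{R}^7$ with its standard inner product and basis. Let $\varphi = e_{123} - e_{167} - e_{527} - e_{563} - e_{415} - e_{426} - e_{437}$ ($e_{ijk} = e_i\wedge e_j \wedge e_k$) and define the cross product by $\langle u\times v, w\rangle = \varphi(u,v,w)$. A skew bilinear form $X$ is identified with the skew-adjoint operator $X$ given by $X(u,v) = \langle X(u),v\rangle$ (rank and kernel refer to this operator). $\Lambda^2_{14} = \mathfrak{g}_2$ is the set of skew bilinear forms $X$ with $X(v\times w) = X(v)\times w + v \times X(w)$ for all $v,w$. A $3$-dimensional subspace is associative if it is closed under $\times$. *)

(* R^7 is modelled by row vectors 'rV[R]_7 over a realType R,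
   standard basis e_1..e_7 = delta rows at ordinals 0..6. *)
From HB Require Import structures.
From mathcomp Require Import all_boot all_order all_algebra.
From mathcomp Require Import reals.
Set Implicit Arguments. Unset Strict Implicit. Unset Printing Implicit Defensive.
Import Order.TTheory GRing.Theory Num.Theory.
Local Open Scope ring_scope.

Section G2.
Variable R : realType.
Notation vec := 'rV[R]_7.

(* index with 1-based numbering as in the paper *)
Definition ix (i : nat) : 'I_7 := inord i.-1.

Definition dotv (u v : vec) : R := \sum_(k < 7) u 0 k * v 0 k.

(* e_{ijk} = e_i /\ e_j /\ e_k evaluated on (u,v,w): the 3x3 determinant *)
Definition e3 (i j k : nat) (u v w : vec) : R :=
  \det (\matrix_(a < 3, b < 3)
          (nth u [:: u; v; w] a) 0 (ix (nth i [:: i; j; k] b))).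

Definition phi (u v w : vec) : R :=
  e3 1 2 3 u v w - e3 1 6 7 u v w - e3 5 2 7 u v w - e3 5 6 3 u v w
  - e3 4 1 5 u v w - e3 4 2 6 u v w - e3 4 3 7 u v w.

(* cross product: <u x v, w> = phi(u,v,w); its k-th coordinate is phi(u,v,e_k) *)
Definition cross (u v : vec) : vec := \row_(k < 7) phi u v (delta_mx 0 k).

(* the skew-adjoint operator X acting on the vector u (X u, as a row vector) *)
Definition op (X : 'M[R]_7) (u : vec) : vec := u *m X^T.

(* skew bilinear forms, identified with skew-adjoint matrices *)
Definition skew (X : 'M[R]_7) : Prop := X^T = - X.

Definition in_g2 (X : 'M[R]_7) : Prop :=
  skew X /\
  forall v w : vec, op X (cross v w) = cross (op X v) w + cross v (op X w).

Definition associative_plane (U : 'M[R]_(3, 7)) : Prop :=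
  \rank U = 3%N /\
  forall u v : vec, (u <= U)%MS -> (v <= U)%MS -> (cross u v <= U)%MS.

End G2.

From HB Require Import structures.
From mathcomp Require Import all_boot all_order all_algebra.
From mathcomp Require Import reals.
From mathcomp Require Import ring.
Set Implicit Arguments. Unset Strict Implicit. Unset Printing Implicit Defensive.
Import Order.TTheory GRing.Theory Num.Theory.
Local Open Scope ring_scope.

(* An element X of g2 is a derivation of the cross product, so its kernel is
   closed under the cross product.  Since rank X <= 4 the kernel has dimension
   at least 3 and contains two independent vectors u, v.  The identities
   u x (u x v) = <u,v> u - |u|^2 v and v x (u x v) = |v|^2 u - <u,v> v show that
   span(u, v, u x v) is closed under x, and it is 3-dimensional because u x v
   is nonzero and orthogonal to u and v. *)

Section RowSpaces.
Variable F : fieldType.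

Lemma mxrank_col_mx_rV m n (A : 'M[F]_(m, n)) (w : 'rV_n) :
  ~~ (w <= A)%MS -> \rank (col_mx A w) = (\rank A).+1.
Proof.
move=> wA; rewrite -addsmxE; apply/eqP; rewrite eqn_leq; apply/andP; split.
  apply: leq_trans (mxrank_adds_leqif A w).1 _.
  by rewrite -[X in (_ <= X)%N]addn1 leq_add2l rank_leq_row.
apply: rank_ltmx; rewrite ltmxE addsmxSl /=.
by apply: contra wA; apply: submx_trans (addsmxSr A w).
Qed.

Lemma exists_independent_pair m n (A : 'M[F]_(m, n)) : (2 <= \rank A)%N ->
  exists u v : 'rV_n,
    [/\ (u <= A)%MS, (v <= A)%MS, u != 0 & ~~ (v <= u)%MS].
Proof.
move=> rkA.
have /row_subPn [i] : ~~ (A <= (0 : 'M_n))%MS.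
  by rewrite submx0 -mxrank_eq0 -lt0n (leq_trans _ rkA).
rewrite submx0 => Ai_neq0.
have /row_subPn [j Aj_notin_Ai] : ~~ (A <= row i A)%MS.
  by apply: contraTN rkA => /mxrankS; rewrite rank_rV Ai_neq0 -ltnNge ltnS.
by exists (row i A), (row j A); split; rewrite ?row_sub.
Qed.

Lemma sub_col_mx2P n (x u v : 'rV[F]_n) :
  reflect (exists a b, x = a *: u + b *: v) (x <= col_mx u v)%MS.
Proof.
rewrite -addsmxE; apply: (iffP sub_addsmxP) => [[[a b] ->]|[a [b ->]]].
  by exists (a 0 0), (b 0 0); rewrite -!mul_scalar_mx -!mx11_scalar.
by exists (a%:M, b%:M); rewrite /= !mul_scalar_mx.
Qed.

Lemma sub_col_mx3P n (x u v w : 'rV[F]_n) :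
  reflect (exists a b c, x = a *: u + b *: v + c *: w)
          (x <= col_mx (col_mx u v) w)%MS.
Proof.
rewrite -addsmxE; apply: (iffP sub_addsmxP) => [[[y c] ->]|[a [b [c ->]]]].
  have /sub_col_mx2P [a [b ->]] := submxMl y (col_mx u v).
  by exists a, b, (c 0 0); rewrite {1}[c]mx11_scalar mul_scalar_mx.
have /submxP [y ->] : ((a *: u + b *: v)%R <= col_mx u v)%MS.
  by apply/sub_col_mx2P; exists a, b.
by exists (y, c%:M); rewrite /= mul_scalar_mx.
Qed.

End RowSpaces.

Lemma det_mx33 (R : comNzRingType) (f : nat -> nat -> R) :
  \det (\matrix_(i < 3, j < 3) f i j) =
    f 0 0 * (f 1 1 * f 2 2 - f 1 2 * f 2 1)
  - f 0 1 * (f 1 0 * f 2 2 - f 1 2 * f 2 0)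
  + f 0 2 * (f 1 0 * f 2 1 - f 1 1 * f 2 0).
Proof.
rewrite (expand_det_row _ 0) !big_ord_recl big_ord0 /cofactor.
rewrite !(expand_det_row _ 0) !big_ord_recl !big_ord0 /cofactor !det_mx11.
rewrite !mxE /bump /= ?addn0 ?add0n ?add1n ?expr0 ?expr1; ring.
Qed.

Lemma inord_eq n (a b : nat) : (a <= n)%N -> (b <= n)%N ->
  (inord a == inord b :> 'I_n.+1) = (a == b).
Proof.
move=> an bn; apply/eqP/eqP => [eab|-> //].
by rewrite -(@inordK n a) // -(@inordK n b) // eab.
Qed.

Lemma rowP_inord (T : Type) n (x y : 'rV[T]_n.+1) :
  (forall i, (i <= n)%N -> x 0 (inord i) = y 0 (inord i)) -> x = y.
Proof.
by move=> exy; apply/rowP => k; have := exy k (ltn_ord k); rewrite inord_val.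
Qed.

Section CrossProduct.
Variable R : realType.
Local Notation vec := 'rV[R]_7.
(* 0-based: u`[i] is the coefficient of e_(i+1) in the numbering of [phi]. *)
Local Notation "u `[ i ]" := (u 0 (@inord 6 i))
  (at level 3, i at level 200, format "u `[ i ]").

Definition cross_coords (u v : vec) : seq R :=
  [:: u`[1] * v`[2] - u`[2] * v`[1] + u`[3] * v`[4] - u`[4] * v`[3]
        - u`[5] * v`[6] + u`[6] * v`[5];
      - u`[0] * v`[2] + u`[2] * v`[0] + u`[3] * v`[5] + u`[4] * v`[6]
        - u`[5] * v`[3] - u`[6] * v`[4];
      u`[0] * v`[1] - u`[1] * v`[0] + u`[3] * v`[6] - u`[4] * v`[5]
        + u`[5] * v`[4] - u`[6] * v`[3];
      - u`[0] * v`[4] - u`[1] * v`[5] - u`[2] * v`[6] + u`[4] * v`[0]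
        + u`[5] * v`[1] + u`[6] * v`[2];
      u`[0] * v`[3] - u`[1] * v`[6] + u`[2] * v`[5] - u`[3] * v`[0]
        - u`[5] * v`[2] + u`[6] * v`[1];
      u`[0] * v`[6] + u`[1] * v`[3] - u`[2] * v`[4] - u`[3] * v`[1]
        + u`[4] * v`[2] - u`[6] * v`[0];
      - u`[0] * v`[5] + u`[1] * v`[4] + u`[2] * v`[3] - u`[3] * v`[2]
        - u`[4] * v`[1] + u`[5] * v`[0] ].

Lemma e3E (i j k : nat) (u v w : vec) : e3 i j k u v w =
    u 0 (ix i) * (v 0 (ix j) * w 0 (ix k) - v 0 (ix k) * w 0 (ix j))
  - u 0 (ix j) * (v 0 (ix i) * w 0 (ix k) - v 0 (ix k) * w 0 (ix i))
  + u 0 (ix k) * (v 0 (ix i) * w 0 (ix j) - v 0 (ix j) * w 0 (ix i)).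
Proof.
pose f a b := (nth u [:: u; v; w] a) 0 (ix (nth i [:: i; j; k] b)).
by rewrite /e3 (@det_mx33 _ f).
Qed.

Lemma phi_delta (u v : vec) (i : nat) : (i < 7)%N ->
  phi u v (delta_mx 0 (inord i)) = (cross_coords u v)`_i.
Proof.
move=> i7; rewrite /phi !e3E !mxE /ix /= !inord_eq //.
by do 7?[case: i i7 => [|i] i7]; rewrite /= ?mulr0n ?mulr1n; first [ring | by []].
Qed.

Lemma dotvE (u v : vec) : dotv u v =
  u`[0] * v`[0] + u`[1] * v`[1] + u`[2] * v`[2] + u`[3] * v`[3]
  + u`[4] * v`[4] + u`[5] * v`[5] + u`[6] * v`[6].
Proof.
rewrite /dotv (eq_bigr (fun k : 'I_7 => u`[k] * v`[k])); last first.
  by move=> k _; rewrite inord_val.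
by rewrite -(big_mkord xpredT (fun k => u`[k] * v`[k])) unlock /=; ring.
Qed.

Ltac by_coords :=
  apply: rowP_inord; case=> [|[|[|[|[|[|[|?]]]]]]] ? //;
  rewrite ?dotvE; do 3 rewrite ?mxE ?phi_delta //=; ring.

Lemma cross0l (v : vec) : cross 0 v = 0. Proof. by_coords. Qed.
Lemma cross0r (v : vec) : cross v 0 = 0. Proof. by_coords. Qed.

Lemma cross_crossl (u v : vec) :
  cross u (cross u v) = dotv u v *: u - dotv u u *: v.
Proof. by_coords. Qed.

Lemma cross_crossr (u v : vec) :
  cross v (cross u v) = dotv v v *: u - dotv u v *: v.
Proof. by_coords. Qed.

Lemma cross_combination (u v w : vec) a0 a1 a2 b0 b1 b2 :
  cross (a0 *: u + a1 *: v + a2 *: w) (b0 *: u + b1 *: v + b2 *: w) =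
    (a0 * b1 - a1 * b0) *: cross u v + (a0 * b2 - a2 * b0) *: cross u w
  + (a1 * b2 - a2 * b1) *: cross v w.
Proof. by_coords. Qed.

Lemma dotv_crossl (u v : vec) : dotv u (cross u v) = 0.
Proof. by rewrite dotvE; do 2 rewrite ?mxE ?phi_delta //=; ring. Qed.

Lemma dotv_crossr (u v : vec) : dotv v (cross u v) = 0.
Proof. by rewrite dotvE; do 2 rewrite ?mxE ?phi_delta //=; ring. Qed.

Lemma dotvDl (u v w : vec) : dotv (u + v) w = dotv u w + dotv v w.
Proof. by rewrite /dotv -big_split; apply: eq_bigr => k _; rewrite mxE mulrDl. Qed.

Lemma dotvZl a (u w : vec) : dotv (a *: u) w = a * dotv u w.
Proof. by rewrite /dotv mulr_sumr; apply: eq_bigr => k _; rewrite mxE mulrA. Qed.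

Lemma dotvv_eq0 (u : vec) : (dotv u u == 0) = (u == 0).
Proof.
apply/eqP/eqP => [uu0|->]; last by rewrite /dotv big1 // => k _; rewrite mxE mul0r.
have sq_ge0 (k : 'I_7) : true -> 0 <= u 0 k * u 0 k by rewrite -expr2 sqr_ge0.
have /(_ _ isT) sq0 := psumr_eq0P sq_ge0 uu0.
by apply/rowP => k; rewrite mxE; apply/eqP; rewrite -sqrf_eq0 expr2 sq0.
Qed.

Section SpanCross.
Variables u v : vec.
Hypotheses (u_neq0 : u != 0) (v_notin_u : ~~ (v <= u)%MS).

Lemma cross_neq0 : cross u v != 0.
Proof.
apply: contra v_notin_u => /eqP uv0; apply/sub_rVP.
have uu_neq0 : dotv u u != 0 by rewrite dotvv_eq0.
have /eqP := cross_crossl u v; rewrite uv0 cross0r eq_sym subr_eq0 => /eqP e.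
by exists (dotv u v / dotv u u); rewrite mulrC -scalerA e scalerA mulVf ?scale1r.
Qed.

Lemma cross_notin_span : ~~ (cross u v <= col_mx u v)%MS.
Proof.
apply: contra cross_neq0 => /sub_col_mx2P [a [b uvE]].
by rewrite -dotvv_eq0 {1}uvE dotvDl !dotvZl dotv_crossl dotv_crossr !mulr0 addr0.
Qed.

Lemma rank_span_cross : \rank (col_mx (col_mx u v) (cross u v)) = 3.
Proof. by rewrite !mxrank_col_mx_rV ?cross_notin_span // rank_rV u_neq0. Qed.

Lemma associative_plane_span_cross :
  associative_plane (col_mx (col_mx u v) (cross u v)).
Proof.
split; first exact: rank_span_cross.
move=> x y /sub_col_mx3P [a0 [a1 [a2 ->]]] /sub_col_mx3P [b0 [b1 [b2 ->]]].
rewrite cross_combination cross_crossl cross_crossr; apply/sub_col_mx3P.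
exists ((a0 * b2 - a2 * b0) * dotv u v + (a1 * b2 - a2 * b1) * dotv v v).
exists (- (a0 * b2 - a2 * b0) * dotv u u - (a1 * b2 - a2 * b1) * dotv u v).
exists (a0 * b1 - a1 * b0).
by move: (cross u v) => w; apply/rowP => k; rewrite !mxE; ring.
Qed.

End SpanCross.

Lemma span_cross_sub_kermx (X : 'M[R]_7) (u v : vec) :
  (forall v w : vec, op X (cross v w) = cross (op X v) w + cross v (op X w)) ->
  (u <= kermx X^T)%MS -> (v <= kermx X^T)%MS ->
  (col_mx (col_mx u v) (cross u v) <= kermx X^T)%MS.
Proof.
move=> Xder uK vK; rewrite !col_mx_sub uK vK; apply/sub_kermxP.
move: uK vK => /sub_kermxP Xu0 /sub_kermxP Xv0.
by have := Xder u v; rewrite /op Xu0 Xv0 cross0l cross0r addr0.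
Qed.

End CrossProduct.

Theorem proposition3p1 (R : realType) (X : 'M[R]_7) :
  in_g2 X -> (\rank X <= 4)%N ->
  exists U : 'M[R]_(3, 7),
    associative_plane U /\ (forall u : 'rV[R]_7, (u <= U)%MS -> op X u = 0).
Proof.
move=> [_ Xder] rkX.
have rk_ker : (2 <= \rank (kermx X^T))%N.
  by rewrite mxrank_ker mxrank_tr (leq_trans _ (leq_sub2l 7 rkX)).
have [u [v [uK vK u_neq0 v_notin_u]]] := exists_independent_pair rk_ker.
exists (col_mx (col_mx u v) (cross u v)).
split; first exact: associative_plane_span_cross.
move=> x /submx_trans /(_ (span_cross_sub_kermx Xder uK vK)).
by move/sub_kermxP.
Qed.
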